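(* Give $\Sigma$ the quotient topology of the box topology. Then for any two distinct points $[X],[X']\in\Sigma$ and any closed neighborhoods $V$ of $[X]$ and $V'$ of $[X']$, we have $V\cap V'\neq\emptyset$. In particular, $\Sigma$ is not a Urysohn space.
   Context: mm-spaces are triples $(X,d_X,\mu_X)$ with $(X,d_X)$ complete separable metric and $\mu_X$ a Borel probability measure, with $X=\operatorname{supp}\mu_X$. $\mathcal{X}$ is the set of their isomorphism classes under measure-preserving isometries of supports. The box distance $\square(X,Y)$ is the infimum of $\varepsilon\ge0$ such that there exist Borel maps $\varphi,\psi$ from $[0,1)$ pushing Lebesgue measure to $\mu_X,\mu_Y$ and a Borel $I_0$ of measure $\ge1-\varepsilon$ with $|d_X(\varphi(s),\varphi(t))-d_Y(\psi(s),\psi(t))|\le\varepsilon$ on $I_0$. It induces the box topology. $\mathbb{R}_+$ acts on $\mathcal{X}$ by $tX=(X,t\,d_X,\mu_X)$. $\mathcal{X}_*=\mathcal{X}\setminus\{*\}$, and $\Sigma=\mathcal{X}_*/\mathbb{R}_+$. A Urysohn space is one in which any two distinct points have disjoint closed neighborhoods. *)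

From HB Require Import structures.
From mathcomp Require Import all_boot all_order all_algebra.
From mathcomp Require Import all_classical all_reals all_analysis.
From mathcomp Require Import Rstruct Rstruct_topology.
Set Implicit Arguments. Unset Strict Implicit. Unset Printing Implicit Defensive.
Import Order.TTheory GRing.Theory Num.Theory.
Local Open Scope classical_set_scope.
Local Open Scope ring_scope.

Notation RR := Rdefinitions.R.
Notation RB := (measurableTypeR RR).

Definition is_metric (T : Type) (d : T -> T -> RR) : Prop :=
  (forall x y, 0 <= d x y) /\
  (forall x y, d x y = 0 <-> x = y) /\
  (forall x y, d x y = d y x) /\
  (forall x y z, d x z <= d x y + d y z).

Definition d_open (T : Type) (d : T -> T -> RR) (U : set T) : Prop :=
  forall x, U x -> exists2 r : RR, 0 < r & forall y, d x y < r -> U y.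

Definition d_complete (T : Type) (d : T -> T -> RR) : Prop :=
  forall u : nat -> T,
    (forall e : RR, 0 < e -> exists N : nat, forall m n : nat,
        (N <= m)%N -> (N <= n)%N -> d (u m) (u n) < e) ->
    exists x : T, forall e : RR, 0 < e -> exists N : nat, forall n : nat,
        (N <= n)%N -> d (u n) x < e.

Definition d_separable (T : Type) (d : T -> T -> RR) : Prop :=
  exists s : nat -> T, forall x e, 0 < e -> exists n : nat, d x (s n) < e.

Definition d_borel (T : Type) (d : T -> T -> RR) : set (set T) :=
  <<s [set U | d_open d U] >>.

Definition is_borel_prob (T : Type) (d : T -> T -> RR) (mu : set T -> RR)
  : Prop :=
  (forall B, d_borel d B -> 0 <= mu B) /\
  mu set0 = 0 /\ mu setT = 1 /\
  (forall F : nat -> set T, (forall n, d_borel d (F n)) ->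
     (forall n m, n <> m -> F n `&` F m = set0) ->
     (fun n => \sum_(k < n) mu (F k)) @ \oo --> mu (\bigcup_k F k)).

Record mmspace := MMSpace {
  mm_carrier :> Type;
  mm_dist : mm_carrier -> mm_carrier -> RR;
  mm_mu : set mm_carrier -> RR;
  mm_metric : is_metric mm_dist;
  mm_complete : d_complete mm_dist;
  mm_separable : d_separable mm_dist;
  mm_prob : is_borel_prob mm_dist mm_mu;
  (* X = supp mu_X : every open ball has positive measure *)
  mm_full_support : forall (x : mm_carrier) (r : RR), 0 < r ->
      0 < mm_mu [set y | mm_dist x y < r]
}.

Definition is_point (X : mmspace) : Prop := forall x y : X, x = y.

Definition scaled_iso (t : RR) (X Y : mmspace) : Prop :=
  exists f : X -> Y, bijective f /\
    (forall a b : X, mm_dist (f a) (f b) = t * mm_dist a b) /\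
    (forall B : set Y, d_borel (@mm_dist Y) B ->
        mm_mu (f @^-1` B) = mm_mu B).

Definition mm_iso (X Y : mmspace) : Prop := scaled_iso 1 X Y.

(* [X] = [Y] in Sigma = X_* / R_+ *)
Definition sigma_rel (X Y : mmspace) : Prop :=
  exists2 t : RR, 0 < t & scaled_iso t X Y.

Definition I01 : set RB := [set t | 0 <= t < 1].

(* phi : [0,1) -> X Borel with phi_* (Lebesgue) = mu_X
   (phi is given on all of R; only its values on [0,1) matter) *)
Definition parameter (X : mmspace) (phi : RB -> X) : Prop :=
  forall B : set X, d_borel (@mm_dist X) B ->
    measurable (I01 `&` phi @^-1` B) /\
    lebesgue_measure (I01 `&` phi @^-1` B) = (mm_mu B)%:E.

Definition box_admissible (X Y : mmspace) (eps : RR) : Prop :=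
  0 <= eps /\
  exists (phi : RB -> X) (psi : RB -> Y) (I0 : set RB),
    parameter phi /\ parameter psi /\
    measurable I0 /\ I0 `<=` I01 /\
    ((1 - eps)%:E <= lebesgue_measure I0)%E /\
    (forall s t, I0 s -> I0 t ->
       `|mm_dist (phi s) (phi t) - mm_dist (psi s) (psi t)| <= eps).

Definition box (X Y : mmspace) : RR := inf [set eps | box_admissible X Y eps].

(* A subset of Sigma is represented by a predicate on mm-spaces that is
   invariant under sigma_rel; its elements are the classes [X] with X
   non-trivial (X not isomorphic to * ). *)
Definition sig_saturated (S : mmspace -> Prop) : Prop :=
  forall X Y, sigma_rel X Y -> S X -> S Y.

(* open in the quotient topology: its preimage in X_* is open for the
   (subspace topology of the) box topology *)
Definition sig_open (U : mmspace -> Prop) : Prop :=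
  sig_saturated U /\
  forall X, ~ is_point X -> U X ->
    exists2 e : RR, 0 < e &
      forall Y, ~ is_point Y -> box X Y < e -> U Y.

Definition sig_closed (V : mmspace -> Prop) : Prop :=
  sig_saturated V /\ sig_open (fun X => ~ V X).

Definition sig_closed_nbhd (X : mmspace) (V : mmspace -> Prop) : Prop :=
  sig_closed V /\
  exists U, sig_open U /\ U X /\
    (forall Y, ~ is_point Y -> U Y -> V Y).

Definition sigma_urysohn : Prop :=
  forall X X' : mmspace, ~ is_point X -> ~ is_point X' -> ~ sigma_rel X X' ->
    exists V V', sig_closed_nbhd X V /\ sig_closed_nbhd X' V' /\
      forall Z, ~ is_point Z -> ~ (V Z /\ V' Z).

(* For 0 < s < 1 let Z_s be the space of two points at distance 1 with masses
   1 - s and s.  Every closed neighbourhood V of a class [X] contains [Z_s] for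
   all small s.  Glue to X a point of mass s at distance 1/c + d(x0, x) from
   each x: the resulting space Y is within box distance s of X, so [Y] lies in
   an open U inside V.  The rescaled space cY is X shrunk by c plus a point at
   distance about 1; when c is small, most of the mass of cX sits in a tiny
   ball, so cY is box-close to Z_s.  Since [cY] = [Y] lies in V and V is
   closed, [Z_s] lies in V.  Thus any two closed neighbourhoods meet, and the distinct
   classes [Z_1/2] and [Z_1/3] show that Sigma is not Urysohn. *)

From mathcomp Require Import all_boot all_order all_algebra.
From mathcomp Require Import all_classical all_reals all_analysis.
From mathcomp Require Import Rstruct Rstruct_topology.
From mathcomp Require Import ring lra.
Set Implicit Arguments. Unset Strict Implicit. Unset Printing Implicit Defensive.
Import Order.TTheory GRing.Theory Num.Theory.
Local Open Scope classical_set_scope.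
Local Open Scope ring_scope.

Section BorelSets.
Variables (T : Type) (d : T -> T -> RR).

Lemma d_borel_open U : d_open d U -> d_borel d U.
Proof. exact: sub_sigma_algebra. Qed.

Lemma d_borel0 : d_borel d set0.
Proof. exact: sigma_algebra0. Qed.

Lemma d_borelC A : d_borel d A -> d_borel d (~` A).
Proof. by move=> /sigma_algebraCD; rewrite setTD. Qed.

Lemma d_borel_bigcup (F : nat -> set T) :
  (forall n, d_borel d (F n)) -> d_borel d (\bigcup_n F n).
Proof. exact: sigma_algebra_bigcup. Qed.

Lemma d_borelU A B : d_borel d A -> d_borel d B -> d_borel d (A `|` B).
Proof.
move=> hA hB; rewrite -bigcup2E.
by apply: d_borel_bigcup => -[|[|n]] //=; exact: d_borel0.
Qed.

Lemma d_borelD A B : d_borel d A -> d_borel d B -> d_borel d (A `\` B).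
Proof.
move=> hA hB; rewrite setDE -[A]setCK -setCU.
by apply: d_borelC; apply: d_borelU => //; exact: d_borelC.
Qed.

Lemma d_open_ball x r : is_metric d -> d_open d [set y | d x y < r].
Proof.
case=> _ [_ [_ d_triangle]] y /= hy; exists (r - d x y); first by rewrite subr_gt0.
by move=> z hz /=; have := d_triangle x y z; lra.
Qed.

End BorelSets.

Lemma d_borel_preimage (T1 T2 : Type) (d1 : T1 -> T1 -> RR) (d2 : T2 -> T2 -> RR)
    (f : T1 -> T2) :
  (forall U, d_open d2 U -> d_open d1 (f @^-1` U)) ->
  forall B, d_borel d2 B -> d_borel d1 (f @^-1` B).
Proof.
move=> f_cont B hB.
suff : [set B | d_borel d1 (f @^-1` B)] B by [].
apply: (smallest_sub _ _ hB); last by move=> U /f_cont /d_borel_open.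
split => /=.
- exact: d_borel0.
- by move=> A hA; rewrite setTD; exact: d_borelC.
- by move=> F hF; rewrite preimage_bigcup; exact: d_borel_bigcup.
Qed.

Lemma indic_bigcup_cvg (T : Type) (F : nat -> set T) (p : T) :
  (forall n m, n <> m -> F n `&` F m = set0) ->
  (fun n => \sum_(k < n) \1_(F k) p) @ \oo --> (\1_(\bigcup_k F k) p : RR).
Proof.
move=> disjF; have [[k Fkp]|notF] := pselect (exists k, F k p); last first.
  have notU : ~ (\bigcup_k F k) p by case=> k _ Fkp; apply: notF; exists k.
  rewrite indicE memNset //.
  apply: cvg_near_cst; apply: nearW => n; rewrite big1 // => i _.
  by rewrite indicE memNset // => Fip; apply: notF; exists i.
have indicF i : \1_(F i) p = (i == k)%:R :> RR.
  rewrite indicE; case: eqP => [->|ik]; first by rewrite mem_set.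
  rewrite memNset // => Fip.
  by have : (F i `&` F k) p by []; rewrite disjF.
rewrite indicE mem_set; last by exists k.
apply: cvg_near_cst; exists k.+1 => // n /= kn.
rewrite (bigD1 (Ordinal kn)) //= indicF eqxx big1 ?addr0 // => i /eqP ik.
by rewrite indicF; case: eqP => // ik'; case: ik; exact: val_inj.
Qed.

Section BorelProbability.
Variables (T : Type) (d : T -> T -> RR) (mu : set T -> RR).
Hypothesis mu_prob : is_borel_prob d mu.

Lemma prob_ge0 A : d_borel d A -> 0 <= mu A.
Proof. by case: mu_prob => h _; exact: h. Qed.

Lemma prob0 : mu set0 = 0.
Proof. by case: mu_prob => _ []. Qed.

Lemma probU A B : d_borel d A -> d_borel d B -> A `&` B = set0 ->
  mu (A `|` B) = mu A + mu B.
Proof.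
move=> hA hB AB0; case: mu_prob => _ [_ [_ sigma_add]].
pose F := bigcup2 A B.
have hF n : d_borel d (F n) by case: n => [|[|n]] //; exact: d_borel0.
have disjF n m : n <> m -> F n `&` F m = set0.
  by case: n m => [|[|n]] [|[|m]] //= _; rewrite ?setI0 ?set0I // setIC.
have := sigma_add F hF disjF; rewrite bigcup2E.
have sumF : (fun n => \sum_(k < n) mu (F k)) @ \oo --> mu A + mu B.
  apply: cvg_near_cst; exists 2%N => // -[|[|n]] //= _.
  by rewrite !big_ord_recl big1 ?addr0 ?addrA // => i _; exact: prob0.
by move/(cvg_lim (@Rhausdorff RR)) => <-; rewrite (cvg_lim (@Rhausdorff RR) sumF).
Qed.

Hypothesis d_metric : is_metric d.

Lemma prob_ball_cvg (x0 : T) :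
  (fun n => mu [set y | d x0 y < n%:R]) @ \oo --> (1 : RR).
Proof.
case: mu_prob => _ [_ [muT sigma_add]]; case: d_metric => d_ge0 _.
pose B n := [set y | d x0 y < n%:R].
have hB n : d_borel d (B n) by apply: d_borel_open; exact: d_open_ball.
pose F n := B n.+1 `\` B n.
have disjF_lt n m : (n < m)%N -> F n `&` F m = set0.
  move=> nm; apply/seteqP; split => // y [[yn _] [_ /= ym]].
  by apply: ym; apply: (lt_le_trans yn); rewrite ler_nat.
have disjF n m : n <> m -> F n `&` F m = set0.
  move/eqP; rewrite neq_ltn => /orP[nm|mn]; first exact: disjF_lt.
  by rewrite setIC; exact: disjF_lt.
have coverF : \bigcup_n F n = setT.
  apply/seteqP; split => // y _; exists (Num.truncn (d x0 y)) => //.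
  have /andP[lo hi] := truncn_itv (d_ge0 x0 y).
  by split; [exact: hi | rewrite /B /= ltNge lo].
have sumF n : \sum_(k < n) mu (F k) = mu (B n).
  elim: n => [|n IH].
    rewrite big_ord0 (_ : B 0%N = set0) ?prob0 //.
    by apply/seteqP; split => // y; rewrite /B /=; have := d_ge0 x0 y; lra.
  rewrite big_ord_recr /= IH -probU //; last 2 first.
  - exact: d_borelD.
  - by apply/seteqP; split => // y [? []].
  congr mu; apply/seteqP; split => y; last first.
    by move=> Bny; have [|] := pselect (B n y); [left|right].
  by case=> [|[]//]; rewrite /B /= => yn; apply: (lt_le_trans yn); rewrite ler_nat.
have -> : (fun n => mu [set y | d x0 y < n%:R]) = (fun n => \sum_(k < n) mu (F k)).
  by apply/funext => n; rewrite sumF.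
rewrite -muT -coverF; exact: sigma_add F (fun n => d_borelD (hB _) (hB _)) disjF.
Qed.

Lemma prob_ball_large (x0 : T) (eta : RR) : 0 < eta ->
  exists2 R : RR, 0 < R & 1 - eta <= mu [set y | d x0 y < R].
Proof.
move=> eta_gt0; have := prob_ball_cvg x0.
move=> /(@cvgrPdist_lt _ RR^o) /(_ eta eta_gt0) [N _ near1].
exists N.+1%:R; first by rewrite ltr0Sn.
by have := near1 N.+1 (leqnSn N); rewrite /= ltr_norml => /andP[_]; lra.
Qed.

End BorelProbability.

Section MMSpaceFacts.
Variable X : mmspace.
Implicit Types x y z : X.

Lemma mm_dist_ge0 x y : 0 <= mm_dist x y.
Proof. by case: (@mm_metric X). Qed.

Lemma mm_dist_eq0 x y : mm_dist x y = 0 <-> x = y.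
Proof. by case: (@mm_metric X) => _ []. Qed.

Lemma mm_distC x y : mm_dist x y = mm_dist y x.
Proof. by case: (@mm_metric X) => _ [_ []]. Qed.

Lemma mm_dist_triangle x y z : mm_dist x z <= mm_dist x y + mm_dist y z.
Proof. by case: (@mm_metric X) => _ [_ [_]]. Qed.

Lemma mm_borel_ball x r : d_borel (@mm_dist X) [set y | mm_dist x y < r].
Proof. by apply: d_borel_open; apply: d_open_ball; exact: mm_metric. Qed.

End MMSpaceFacts.

Section Adjoin.
Variables (X : mmspace) (x0 : X) (c L s : RR).
Hypotheses (c_gt0 : 0 < c) (L_gt0 : 0 < L) (s_gt0 : 0 < s) (s_lt1 : s < 1).

Definition adjoin_dist (a b : option X) : RR :=
  match a, b with
  | Some x, Some y => c * mm_dist x y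
  | Some x, None | None, Some x => L + c * mm_dist x0 x
  | None, None => 0
  end.

Definition adjoin_mu (B : set (option X)) : RR :=
  (1 - s) * mm_mu (Some @^-1` B) + s * \1_B None.

Lemma adjoin_metric : is_metric adjoin_dist.
Proof.
have scaled_ge0 (x y : X) : 0 <= c * mm_dist x y := mulr_ge0 (ltW c_gt0) (mm_dist_ge0 x y).
have far (x : X) : 0 < L + c * mm_dist x0 x by have := scaled_ge0 x0 x; move: L_gt0; lra.
have scaled_triangle (x y z : X) : c * mm_dist x z <= c * mm_dist x y + c * mm_dist y z.
  by rewrite -mulrDr ler_wpM2l ?(ltW c_gt0) ?mm_dist_triangle.
split.
  case=> [x|] [y|] /=; [exact: scaled_ge0 | exact/ltW/far | exact/ltW/far | exact: lexx].
split.
  case=> [x|] [y|] /=; split => //.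
  - by move/eqP; rewrite mulf_eq0 gt_eqF //= => /eqP/mm_dist_eq0 ->.
  - by case=> ->; rewrite (proj2 (mm_dist_eq0 y y)) ?mulr0.
  - by move=> Lx; have := far x; rewrite Lx ltxx.
  - by move=> Ly; have := far y; rewrite Ly ltxx.
split; first by case=> [x|] [y|] //=; rewrite mm_distC.
case=> [x|] [y|] [z|] /=.
- exact: scaled_triangle.
- by have := scaled_triangle x0 y x; rewrite (mm_distC y x); lra.
- by have := scaled_triangle x x0 z; rewrite (mm_distC x x0); move: L_gt0; lra.
- by have := scaled_ge0 x0 x; lra.
- by have := scaled_triangle x0 y z; lra.
- by have := scaled_ge0 x0 y; move: L_gt0; lra.
- by have := scaled_ge0 x0 z; lra.
- by [].
Qed.

Lemma adjoin_complete : d_complete adjoin_dist.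
Proof.
have scaled_ge0 (x y : X) : 0 <= c * mm_dist x y := mulr_ge0 (ltW c_gt0) (mm_dist_ge0 x y).
move=> u u_cauchy; have [N uN] := u_cauchy L L_gt0.
case eN : (u N) => [x|]; last first.
  exists None => e e_gt0; exists N => n Nn.
  have := uN N n (leqnn N) Nn; rewrite eN; case: (u n) => [y|] //= h.
  by have := scaled_ge0 x0 y; lra.
pose v n := if u n is Some y then y else x0.
have uv n : (N <= n)%N -> u n = Some (v n).
  move=> Nn; have := uN N n (leqnn N) Nn; rewrite eN /v.
  by case: (u n) => [y|] //= h; exfalso; have := scaled_ge0 x0 x; lra.
have v_cauchy e : 0 < e -> exists M : nat, forall m n : nat,
    (M <= m)%N -> (M <= n)%N -> mm_dist (v m) (v n) < e.
  move=> e_gt0; have [M uM] := u_cauchy (e * c) (mulr_gt0 e_gt0 c_gt0).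
  exists (maxn N M) => m n; rewrite !geq_max => /andP[Nm Mm] /andP[Nn Mn].
  by have := uM m n Mm Mn; rewrite (uv m Nm) (uv n Nn) /= mulrC ltr_pM2r.
have [y vy] := mm_complete v_cauchy.
exists (Some y) => e e_gt0; have [M vM] := vy (e / c) (divr_gt0 e_gt0 c_gt0).
exists (maxn N M) => n; rewrite geq_max => /andP[Nn Mn].
by rewrite (uv n Nn) /= -ltr_pdivlMl // mulrC; exact: vM.
Qed.

Lemma adjoin_separable : d_separable adjoin_dist.
Proof.
have [q q_dense] := @mm_separable X.
exists (fun n => if n is n'.+1 then Some (q n') else None) => -[x|] e e_gt0.
- have [n xn] := q_dense x (e / c) (divr_gt0 e_gt0 c_gt0).
  by exists n.+1; rewrite /= -ltr_pdivlMl // mulrC.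
- by exists 0%N.
Qed.

Lemma adjoin_Some_borel B :
  d_borel adjoin_dist B -> d_borel (@mm_dist X) (Some @^-1` B).
Proof.
apply: d_borel_preimage => U U_open y /U_open [r r_gt0 Ur].
exists (r / c); first exact: divr_gt0.
by move=> z yz; apply: Ur; rewrite /= -ltr_pdivlMl // mulrC.
Qed.

Lemma adjoin_prob : is_borel_prob adjoin_dist adjoin_mu.
Proof.
have [_ [_ [muT sigma_add]]] := @mm_prob X.
split.
  move=> B /adjoin_Some_borel /(prob_ge0 (@mm_prob X)) muB_ge0.
  rewrite /adjoin_mu indicE; apply: addr_ge0; apply: mulr_ge0 => //.
  - by rewrite subr_ge0 ltW.
  - exact: ltW.
split.
  by rewrite /adjoin_mu preimage_set0 (prob0 (@mm_prob X)) indicE in_set0 !mulr0 addr0.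
split; first by rewrite /adjoin_mu preimage_setT muT indicE in_setT !mulr1 subrK.
move=> F hF disjF.
have disjSomeF n m : n <> m -> Some @^-1` F n `&` Some @^-1` F m = set0.
  by move=> nm; rewrite -preimage_setI disjF.
have h1 := sigma_add _ (fun n => adjoin_Some_borel (hF n)) disjSomeF.
have h2 := indic_bigcup_cvg (p := None) disjF.
rewrite /adjoin_mu preimage_bigcup.
under eq_fun do rewrite /adjoin_mu big_split -!mulr_sumr.
exact: (@cvgD _ RR^o) (cvgMl_tmp (a := 1 - s) h1) (cvgMl_tmp (a := s) h2).
Qed.

Lemma adjoin_full_support (a : option X) (r : RR) :
  0 < r -> 0 < adjoin_mu [set b | adjoin_dist a b < r].
Proof.
move=> r_gt0; rewrite /adjoin_mu indicE; case: a => [x|].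
- have -> : Some @^-1` [set b | adjoin_dist (Some x) b < r] =
      [set y | mm_dist x y < r / c].
    by apply/seteqP; split => y; rewrite /= ltr_pdivlMr // mulrC.
  apply: ltr_wpDr; first by rewrite mulr_ge0 ?ler0n ?ltW.
  by rewrite mulr_gt0 ?subr_gt0 ?mm_full_support ?divr_gt0.
- rewrite mem_set // mulr1; apply: ltr_pwDr => //.
  have ball_borel := d_borel_open (d_open_ball (x := None) (r := r) adjoin_metric).
  apply: mulr_ge0; first by rewrite subr_ge0 ltW.
  by have := prob_ge0 (@mm_prob X) (adjoin_Some_borel ball_borel).
Qed.

Definition adjoin : mmspace :=
  MMSpace adjoin_metric adjoin_complete adjoin_separable adjoin_prob
    adjoin_full_support.

Lemma adjoin_not_point : ~ is_point adjoin.
Proof. by move/(_ (Some x0) None). Qed.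

End Adjoin.

Lemma adjoin_scale (X : mmspace) (x0 : X) (c L c' L' s t : RR)
    (c_gt0 : 0 < c) (L_gt0 : 0 < L) (c'_gt0 : 0 < c') (L'_gt0 : 0 < L')
    (s_gt0 : 0 < s) (s_lt1 : s < 1) :
  0 < t -> c' = t * c -> L' = t * L ->
  sigma_rel (adjoin x0 c_gt0 L_gt0 s_gt0 s_lt1) (adjoin x0 c'_gt0 L'_gt0 s_gt0 s_lt1).
Proof.
move=> t_gt0 c'E L'E; exists t => //; exists id; split; first by exists id.
by split=> // -[a|] [b|] /=; rewrite ?mulr0 // c'E ?L'E; ring.
Qed.

Definition point_dist (x y : unit) : RR := 0.
Definition point_mu (B : set unit) : RR := \1_B tt.

Lemma point_metric : is_metric point_dist.
Proof.
rewrite /point_dist; split=> //; split; first by case=> -[].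
by split=> // _ _ _; rewrite addr0.
Qed.

Lemma point_complete : d_complete point_dist.
Proof. by move=> u _; exists tt => e e_gt0; exists 0%N. Qed.

Lemma point_separable : d_separable point_dist.
Proof. by exists (fun _ => tt) => -[] e e_gt0; exists 0%N. Qed.

Lemma point_prob : is_borel_prob point_dist point_mu.
Proof.
rewrite /point_mu; split; first by move=> B _; rewrite indicE ler0n.
split; first by rewrite indicE in_set0.
split; first by rewrite indicE in_setT.
by move=> F _ disjF; exact: indic_bigcup_cvg.
Qed.

Lemma point_full_support (x : unit) (r : RR) :
  0 < r -> 0 < point_mu [set y | point_dist x y < r].
Proof. by move=> r_gt0; rewrite /point_mu indicE mem_set. Qed.

Definition mm_point : mmspace :=
  MMSpace point_metric point_complete point_separable point_prob point_full_support.

(* Z_s: the points [Some tt] and [None] are at distance 1, with masses 1 - s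
   and s. *)
Definition two_point (s : RR) (s_gt0 : 0 < s) (s_lt1 : s < 1) : mmspace :=
  adjoin (X := mm_point) tt ltr01 ltr01 s_gt0 s_lt1.

Lemma two_point_not_point (s : RR) (s_gt0 : 0 < s) (s_lt1 : s < 1) :
  ~ is_point (two_point s_gt0 s_lt1).
Proof. exact: adjoin_not_point. Qed.

Section TwoPointMasses.
Variables (s : RR) (s_gt0 : 0 < s) (s_lt1 : s < 1).

Lemma two_point_mu_None : mm_mu [set None : two_point s_gt0 s_lt1] = s.
Proof.
rewrite /= /adjoin_mu (_ : Some @^-1` _ = set0); last by apply/seteqP; split=> -[].
by rewrite /= /point_mu !indicE in_set0 mem_set // mulr0 add0r mulr1.
Qed.

Lemma two_point_mu_Some : mm_mu [set Some tt : two_point s_gt0 s_lt1] = 1 - s.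
Proof.
rewrite /= /adjoin_mu (_ : Some @^-1` _ = setT); last by apply/seteqP; split=> -[].
by rewrite /= /point_mu !indicE in_setT [None \in _]memNset // mulr0 addr0 mulr1.
Qed.

End TwoPointMasses.

Lemma two_point_sigma_rel (a b : RR) (a_gt0 : 0 < a) (a_lt1 : a < 1)
    (b_gt0 : 0 < b) (b_lt1 : b < 1) :
  sigma_rel (two_point a_gt0 a_lt1) (two_point b_gt0 b_lt1) -> a = b \/ a + b = 1.
Proof.
move=> [_ _ [f [[g fK gK] [_ f_mu]]]].
pose top : two_point b_gt0 b_lt1 := None.
have ballE : [set y | mm_dist top y < 1] = [set None].
  by apply/seteqP; split => -[[]|] //=; rewrite /point_dist mulr0 addr0 ltxx.
have preE : f @^-1` [set None] = [set g None].
  by apply/seteqP; split => x /= => [<-|->]; rewrite ?fK ?gK.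
have := f_mu _ (mm_borel_ball top 1); rewrite ballE preE two_point_mu_None.
case: (g None) => [[]|]; rewrite ?two_point_mu_None ?two_point_mu_Some => <-.
- by right; ring.
- by left.
Qed.

Lemma I01E : I01 = `[0, 1[%classic.
Proof. by apply/seteqP; split => t; rewrite /I01 /= in_itv. Qed.

Lemma measurable_I01 : measurable I01.
Proof. by rewrite I01E. Qed.

Lemma lebesgue_I01 : lebesgue_measure I01 = 1%:E.
Proof. by rewrite I01E lebesgue_measure_itv /= lte_fin ltr01 oppr0 adde0. Qed.

Lemma I01_affine (b k t : RR) : 0 < k -> (0 <= (t - b) / k < 1) = (b <= t < b + k).
Proof.
by move=> k_gt0; rewrite ler_pdivlMr // ltr_pdivrMr // mul0r mul1r subr_ge0 ltrBlDl.
Qed.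

Lemma lebesgue_preimage_affine (b k : RR) (A : set RB) : 0 < k -> measurable A ->
  measurable ((fun t : RB => (t - b) / k) @^-1` A) /\
  lebesgue_measure ((fun t : RB => (t - b) / k) @^-1` A) = (k%:E * lebesgue_measure A)%E.
Proof.
move=> k_gt0 mA; pose h (t : RB) : RB := (t - b) / k.
have mh : measurable_fun setT h.
  apply: (@measurable_realfun.measurable_funM _ _ _ _ _ (fun _ => k^-1)) => //.
  exact: (@measurable_realfun.measurable_funB _ _ _ _ id (fun _ => b)).
have mpre B : measurable B -> measurable (h @^-1` B).
  by move=> mB; rewrite -[X in measurable X]setTI; exact: mh.
split; first exact: mpre.
have kV_ge0 : 0 <= k^-1 by rewrite invr_ge0 ltW.
pose nu := mscale (NngNum kV_ge0)
  (measure_function_pushforward__canonical__measure_function_Measure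
     (@lebesgue_measure RR) mh).
have lebesgue_nu : forall X, measurable X -> lebesgue_measure X = nu X.
  apply: lebesgue_measure_unique => _ [[x y] _ <-] /=.
  rewrite /nu /mscale /= /pushforward.
  have -> : h @^-1` `]x, y] = `](k * x + b), (k * y + b)]%classic.
    apply/seteqP; split => t; rewrite /h /= !in_itv /=.
    - by rewrite ltr_pdivlMr // ler_pdivrMr // => /andP[? ?]; apply/andP; split; nra.
    - by rewrite ltr_pdivlMr // ler_pdivrMr // => /andP[? ?]; apply/andP; split; nra.
  rewrite !lebesgue_measure_itv /= !lte_fin ltrD2r ltr_pM2l //.
  case: ifP => _; last by rewrite mule0.
  rewrite -!EFinD -EFinM; congr (_%:E).
  by field; rewrite gt_eqF.
rewrite (lebesgue_nu A mA) /nu /mscale /= muleA -EFinM divff ?mul1e //.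
by rewrite gt_eqF.
Qed.

Lemma lebesgue_const_preimage (T : Type) (p : T) (B : set T) :
  measurable (I01 `&` (fun _ : RB => p) @^-1` B) /\
  lebesgue_measure (I01 `&` (fun _ : RB => p) @^-1` B) = (\1_B p)%:E.
Proof.
rewrite indicE; have [Bp|nBp] := pselect (B p).
  rewrite mem_set // (_ : _ `&` _ = I01); last by apply/seteqP; split => t // [].
  by split; [exact: measurable_I01 | exact: lebesgue_I01].
rewrite memNset // (_ : _ `&` _ = set0); last by apply/seteqP; split => t // [].
by split; [exact: measurable0 | exact: measure0].
Qed.

Definition param_concat (T : Type) (s : RR) (f1 f2 : RB -> T) (t : RB) : T :=
  if t < 1 - s then f1 (t / (1 - s)) else f2 ((t - (1 - s)) / s).

Section ParamConcat.
Variables (T : Type) (s : RR) (f1 f2 : RB -> T) (B : set T).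
Hypotheses (s_gt0 : 0 < s) (s_lt1 : s < 1).

Lemma param_concat_preimageE :
  I01 `&` param_concat s f1 f2 @^-1` B =
  (fun t : RB => t / (1 - s)) @^-1` (I01 `&` f1 @^-1` B) `|`
  (fun t : RB => (t - (1 - s)) / s) @^-1` (I01 `&` f2 @^-1` B).
Proof.
have s'_gt0 : 0 < 1 - s by rewrite subr_gt0.
have I01_left t : (0 <= t / (1 - s) < 1) = (0 <= t < 1 - s).
  by rewrite -[t in t / _]subr0 I01_affine // add0r.
have I01_right t : (0 <= (t - (1 - s)) / s < 1) = (1 - s <= t < 1).
  by rewrite I01_affine // subrK.
apply/seteqP; split => t; rewrite /I01 /param_concat /=.
- move=> [/andP[t_ge0 t_lt1]]; case: ifP => ts Bt; [left | right]; split => //.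
    by rewrite I01_left t_ge0.
  by rewrite I01_right t_lt1 leNgt ts.
- case=> -[]; rewrite ?I01_left ?I01_right => /andP[lo hi] Bt.
    by rewrite lo (lt_le_trans hi) ?gerBl ?ltW // hi.
  by rewrite (le_trans _ lo) ?subr_ge0 ?ltW // hi ltNge lo.
Qed.

Lemma param_concat_preimage :
  measurable (I01 `&` f1 @^-1` B) -> measurable (I01 `&` f2 @^-1` B) ->
  measurable (I01 `&` param_concat s f1 f2 @^-1` B) /\
  lebesgue_measure (I01 `&` param_concat s f1 f2 @^-1` B) =
   ((1 - s)%:E * lebesgue_measure (I01 `&` f1 @^-1` B) +
    s%:E * lebesgue_measure (I01 `&` f2 @^-1` B))%E.
Proof.
move=> m1 m2; have s'_gt0 : 0 < 1 - s by rewrite subr_gt0.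
have [mA1 eA1] := lebesgue_preimage_affine 0 s'_gt0 m1.
have [mA2 eA2] := lebesgue_preimage_affine (1 - s) s_gt0 m2.
have disj : (fun t : RB => (t - 0) / (1 - s)) @^-1` (I01 `&` f1 @^-1` B) `&`
    (fun t : RB => (t - (1 - s)) / s) @^-1` (I01 `&` f2 @^-1` B) = set0.
  apply/seteqP; split => // t [[+ _] [+ _]]; rewrite /I01 /=.
  rewrite !I01_affine // add0r subrK => /andP[_ lo] /andP[hi _].
  by have := lt_le_trans lo hi; rewrite ltxx.
rewrite param_concat_preimageE.
rewrite (_ : (fun t : RB => t / (1 - s)) = (fun t => (t - 0) / (1 - s))); last first.
  by apply/funext => t; rewrite subr0.
split; first exact: measurableU.
by rewrite measureU //; congr (_ + _)%E; [exact: eA1 | exact: eA2].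
Qed.

End ParamConcat.

Lemma adjoin_parameter (X : mmspace) (x0 : X) (c L s : RR) (c_gt0 : 0 < c)
    (L_gt0 : 0 < L) (s_gt0 : 0 < s) (s_lt1 : s < 1) (phi : RB -> X) :
  parameter phi ->
  parameter (X := adjoin x0 c_gt0 L_gt0 s_gt0 s_lt1)
    (param_concat s (Some \o phi) (fun _ => None)).
Proof.
move=> phi_param B /(adjoin_Some_borel c_gt0) /phi_param [m1 e1].
have [m2 e2] := lebesgue_const_preimage None B.
have [m e] := param_concat_preimage (f1 := Some \o phi) s_gt0 s_lt1 m1 m2.
by split => //; rewrite e e2 [X in (_ * X)%E]e1 -!EFinM -EFinD.
Qed.

Lemma parameter_concat_self (X : mmspace) (s : RR) (s_gt0 : 0 < s) (s_lt1 : s < 1)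
    (phi : RB -> X) :
  parameter phi -> parameter (param_concat s phi phi).
Proof.
move=> phi_param B /phi_param [m1 e1].
have [m e] := param_concat_preimage s_gt0 s_lt1 m1 m1.
by split => //; rewrite e e1 -!EFinM -EFinD -mulrDl subrK mul1r.
Qed.

Lemma two_point_parameter (s : RR) (s_gt0 : 0 < s) (s_lt1 : s < 1) :
  parameter (X := two_point s_gt0 s_lt1)
    (param_concat s (fun _ => Some tt) (fun _ => None)).
Proof.
apply: (@adjoin_parameter mm_point tt _ _ _ _ _ _ _ (fun _ => tt)) => B _.
exact: lebesgue_const_preimage.
Qed.

Lemma box_le (X Y : mmspace) (e : RR) : box_admissible X Y e -> box X Y <= e.
Proof. by apply: ge_inf; exists 0 => x []. Qed.

Lemma box_no_parameter (X Y : mmspace) :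
  (forall phi : RB -> X, ~ parameter phi) -> box X Y = 0.
Proof.
move=> no_param; rewrite /box (_ : [set eps | _] = set0) ?inf0 //.
by apply/seteqP; split => // e [_ [phi [psi [I0 [/no_param]]]]].
Qed.

Lemma box_adjoin_le (X : mmspace) (x0 : X) (L s : RR) (L_gt0 : 0 < L)
    (s_gt0 : 0 < s) (s_lt1 : s < 1) (phi : RB -> X) :
  parameter phi -> box X (adjoin x0 ltr01 L_gt0 s_gt0 s_lt1) <= s.
Proof.
move=> phi_param; apply: box_le; split; first exact: ltW.
have s'_gt0 : 0 < 1 - s by rewrite subr_gt0.
exists (param_concat s phi phi), (param_concat s (Some \o phi) (fun _ => None)),
  `[0, 1 - s[%classic.
split; first exact: parameter_concat_self.
split; first exact: adjoin_parameter.
split=> //; split.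
  move=> t; rewrite /I01 /= in_itv /= => /andP[-> t_lt] /=.
  by rewrite (lt_le_trans t_lt) // gerBl ltW.
split; first by rewrite lebesgue_measure_itv /= lte_fin s'_gt0 oppr0 adde0.
move=> u v; rewrite /= !in_itv /= => /andP[_ u_lt] /andP[_ v_lt].
by rewrite /param_concat u_lt v_lt /= mul1r subrr normr0 ltW.
Qed.

Lemma box_two_point_adjoin_le (X : mmspace) (x0 : X) (c s R eta : RR)
    (c_gt0 : 0 < c) (s_gt0 : 0 < s) (s_lt1 : s < 1) (phi : RB -> X) :
  parameter phi -> 0 < eta -> 0 < R ->
  1 - eta <= mm_mu [set y | mm_dist x0 y < R] -> c * R <= eta / 2 ->
  box (two_point s_gt0 s_lt1) (adjoin x0 c_gt0 ltr01 s_gt0 s_lt1) <= eta.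
Proof.
move=> phi_param eta_gt0 R_gt0 ball_large cR_small; apply: box_le; split; first exact: ltW.
pose Y := adjoin x0 c_gt0 ltr01 s_gt0 s_lt1.
pose psi := param_concat s (Some \o phi) (fun _ => None).
pose top : Y := None.
(* The glued point together with the ball B(x0, R). *)
pose near_top := [set y | mm_dist top y < 1 + c * R].
have [mI0 I0_measure] := @adjoin_parameter X x0 c 1 s c_gt0 ltr01 s_gt0 s_lt1 phi
  phi_param _ (mm_borel_ball top (1 + c * R)).
exists (param_concat s (fun _ => Some tt) (fun _ => None)), psi,
  (I01 `&` psi @^-1` near_top).
split; first exact: two_point_parameter.
split; first exact: adjoin_parameter.
split=> //; split; first exact: subIsetl.
split.
  rewrite I0_measure lee_fin /= /adjoin_mu indicE mem_set /=; last first.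
    by rewrite ltr_pwDl ?mulr_ge0 ?ltW.
  rewrite (_ : Some @^-1` _ = [set y | mm_dist x0 y < R] :> set X); last first.
    by apply/seteqP; split => y; rewrite /= ltrD2l ltr_pM2l.
  by nra.
have scaled_ge0 (y z : X) : 0 <= c * mm_dist y z := mulr_ge0 (ltW c_gt0) (mm_dist_ge0 y z).
have near_Some (y : X) : near_top (Some y) -> c * mm_dist x0 y <= eta / 2.
  rewrite /near_top /= ltrD2l ltr_pM2l // => yR.
  by apply: le_trans cR_small; rewrite ler_pM2l // ltW.
move=> u v [_ +] [_ +]; rewrite /psi /param_concat /=.
case: ifP => _; case: ifP => _ /=; rewrite ?mulr0 ?addr0 ?subrr ?normr0 ?(ltW eta_gt0) //.
- move=> /near_Some u_near /near_Some v_near.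
  set pu := phi _; set pv := phi _.
  have := ler_wpM2l (ltW c_gt0) (mm_dist_triangle pu x0 pv).
  rewrite mulrDr (mm_distC pu x0).
  by rewrite ler_norml; have := scaled_ge0 pu pv; lra.
- move=> /near_Some u_near _; rewrite ler_norml.
  by have := scaled_ge0 x0 (phi (u / (1 - s))); lra.
- move=> _ /near_Some v_near; rewrite ler_norml.
  by have := scaled_ge0 x0 (phi (v / (1 - s))); lra.
Qed.

Lemma closed_nbhd_two_point (X : mmspace) (V : mmspace -> Prop) :
  ~ is_point X -> sig_closed_nbhd X V ->
  exists2 e : RR, 0 < e & forall (s : RR) (s_gt0 : 0 < s) (s_lt1 : s < 1),
    s < e -> V (two_point s_gt0 s_lt1).
Proof.
move=> X_np [[_ [_ notV_open]] [U [[U_sat U_open] [UX UV]]]].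
have [e e_gt0 U_ball] := U_open X X_np UX.
exists e => // s s_gt0 s_lt1 s_lt_e.
have Z_np := @two_point_not_point s s_gt0 s_lt1.
have [[phi phi_param]|no_param] :=
  pselect (exists phi : RB -> X, parameter phi); last first.
  (* Every mm-space has a parameter; rather than proving this, note that
     otherwise [box X] vanishes identically. *)
  apply: (UV _ Z_np); apply: (U_ball _ Z_np).
  by rewrite box_no_parameter // => phi phi_param; apply: no_param; exists phi.
apply: contrapT => notVZ.
have [e' e'_gt0 notV_ball] := notV_open _ Z_np notVZ.
have e'2_gt0 : 0 < e' / 2 by rewrite divr_gt0.
have [R R_gt0 ball_large] := prob_ball_large (@mm_prob X) (@mm_metric X) (phi 0) e'2_gt0.
pose c := e' / 2 / 2 / R.
have c_gt0 : 0 < c by rewrite !divr_gt0.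
have cV_gt0 : 0 < c^-1 by rewrite invr_gt0.
pose Y := adjoin (phi 0) ltr01 cV_gt0 s_gt0 s_lt1.
pose cY := adjoin (phi 0) c_gt0 ltr01 s_gt0 s_lt1.
have UY : U Y.
  apply: U_ball; first exact: adjoin_not_point.
  exact: le_lt_trans (box_adjoin_le (phi 0) cV_gt0 s_gt0 s_lt1 phi_param) s_lt_e.
have Y_cY : sigma_rel Y cY.
  by apply: (adjoin_scale (phi 0) _ _ _ _ _ _ c_gt0); rewrite ?mulr1 // mulfV ?gt_eqF.
have UcY : U cY := U_sat _ _ Y_cY UY.
have cY_np : ~ is_point cY by exact: adjoin_not_point.
apply: (notV_ball cY cY_np _ (UV cY cY_np UcY)).
apply: le_lt_trans
  (box_two_point_adjoin_le c_gt0 s_gt0 s_lt1 phi_param e'2_gt0 R_gt0 ball_large _) _.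
  by rewrite /c divfK ?gt_eqF.
by rewrite ltr_pdivrMr // ltr_pMr // ltr1n.
Qed.

Lemma closed_nbhds_meet (X X' : mmspace) (V V' : mmspace -> Prop) :
  ~ is_point X -> ~ is_point X' -> sig_closed_nbhd X V -> sig_closed_nbhd X' V' ->
  exists Z : mmspace, ~ is_point Z /\ V Z /\ V' Z.
Proof.
move=> X_np X'_np /(closed_nbhd_two_point X_np) [e e_gt0 VZ].
move=> /(closed_nbhd_two_point X'_np) [e' e'_gt0 V'Z].
pose m := Num.min (Num.min e e') 1.
have m_gt0 : 0 < m by rewrite !lt_min e_gt0 e'_gt0 ltr01.
have s_gt0 : 0 < m / 2 by rewrite divr_gt0.
have s_lt_m : m / 2 < m by rewrite ltr_pdivrMr // ltr_pMr // ltr1n.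
have s_lt1 : m / 2 < 1 by apply: lt_le_trans s_lt_m _; rewrite ge_min lexx orbT.
exists (two_point s_gt0 s_lt1); split; first exact: two_point_not_point.
split; [apply: VZ | apply: V'Z]; apply: lt_le_trans s_lt_m _; rewrite !ge_min lexx //.
by rewrite orbT.
Qed.

Theorem lemma3p2 :
  (forall X X' : mmspace, ~ is_point X -> ~ is_point X' -> ~ sigma_rel X X' ->
     forall V V' : mmspace -> Prop,
       sig_closed_nbhd X V -> sig_closed_nbhd X' V' ->
       exists Z : mmspace, ~ is_point Z /\ V Z /\ V' Z)
  /\ ~ sigma_urysohn.
Proof.
split=> [X X' X_np X'_np _ V V'|urysohn]; first exact: closed_nbhds_meet.
have half_gt0 : 0 < 1 / 2 :> RR by rewrite divr_gt0.
have half_lt1 : 1 / 2 < 1 :> RR by rewrite ltr_pdivrMr // mul1r ltr1n.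
have third_gt0 : 0 < 1 / 3 :> RR by rewrite divr_gt0.
have third_lt1 : 1 / 3 < 1 :> RR by rewrite ltr_pdivrMr // mul1r ltr1n.
have Z2_np := @two_point_not_point _ half_gt0 half_lt1.
have Z3_np := @two_point_not_point _ third_gt0 third_lt1.
have Z23 : ~ sigma_rel (two_point half_gt0 half_lt1) (two_point third_gt0 third_lt1).
  by move/two_point_sigma_rel => [|]; lra.
have [V [V' [hV [hV' disjV]]]] := urysohn _ _ Z2_np Z3_np Z23.
have [Z [Z_np [VZ V'Z]]] := closed_nbhds_meet Z2_np Z3_np hV hV'.
exact: disjV Z Z_np (conj VZ V'Z).
Qed.
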